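(* Let $s\ge0$ and let $(X_1,X_2,X_3,Y,U_1,U_2,U_3,U_4)$ have joint distribution factorizing as $$P_{X_1,X_2,X_3,Y}\,P_{U_1|X_1}\,P_{U_2|X_2}\,P_{U_3|X_3}\,P_{U_4|U_2,U_3}.$$ Then, with $\mathbf P=\{P_{U_1|X_1},P_{U_2|X_2},P_{U_3|X_3}\}$, $$\mathcal L_s(\mathbf P)\ \ge\ \mathcal L_s^{\rm low}(\mathbf P,P_{U_4|U_2,U_3}),$$ where $$\mathcal L_s(\mathbf P)=-H(Y|U_1,U_2,U_3)-s\big[I(X_1,X_2,X_3;U_1,U_2,U_3)+I(X_2,X_3;U_2,U_3|U_1)\big]$$ and $$\mathcal L_s^{\rm low}(\mathbf P,P_{U_4|U_2,U_3})=-H(Y|U_1,U_4)-sI(X_1;U_1)-2s\big[I(X_2;U_2)+I(X_3;U_3)\big]+2s\big[I(U_2;U_1)+I(U_3;U_1,U_2)\big].$$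
   Context: All random variables take values in finite sets; all information quantities are computed under the stated joint distribution. *)

From mathcomp Require Import all_boot all_order all_algebra.
From mathcomp Require Import reals exp.
Set Implicit Arguments. Unset Strict Implicit. Unset Printing Implicit Defensive.
Import Order.TTheory GRing.Theory Num.Theory.
Local Open Scope ring_scope.

Section Info.
Variable R : realType.

Definition xlnx (x : R) : R := if x == 0 then 0 else x * ln x.

Variable Om : finType.
Variable p : Om -> R.

Definition pmf_of (A : finType) (f : Om -> A) (a : A) : R :=
  \sum_(w | f w == a) p w.

Definition ent (A : finType) (f : Om -> A) : R :=
  - \sum_(a : A) xlnx (pmf_of f a).

Definition cent (A B : finType) (f : Om -> A) (g : Om -> B) : R :=
  ent (fun w => (f w, g w)) - ent g.

Definition minf (A B : finType) (f : Om -> A) (g : Om -> B) : R :=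
  ent f + ent g - ent (fun w => (f w, g w)).

Definition cminf (A B C : finType) (f : Om -> A) (g : Om -> B) (h : Om -> C) : R :=
  ent (fun w => (f w, h w)) + ent (fun w => (g w, h w))
  - ent (fun w => (f w, g w, h w)) - ent h.
End Info.

Section Model.
Variables (R : realType) (X1 X2 X3 Y U1 U2 U3 U4 : finType).

Definition Omega : finType := (X1 * X2 * X3 * Y * U1 * U2 * U3 * U4)%type.

Definition vX1 (w : Omega) : X1 := w.1.1.1.1.1.1.1.
Definition vX2 (w : Omega) : X2 := w.1.1.1.1.1.1.2.
Definition vX3 (w : Omega) : X3 := w.1.1.1.1.1.2.
Definition vY  (w : Omega) : Y  := w.1.1.1.1.2.
Definition vU1 (w : Omega) : U1 := w.1.1.1.2.
Definition vU2 (w : Omega) : U2 := w.1.1.2.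
Definition vU3 (w : Omega) : U3 := w.1.2.
Definition vU4 (w : Omega) : U4 := w.2.

Definition joint (PX : X1 * X2 * X3 * Y -> R)
  (W1 : X1 -> U1 -> R) (W2 : X2 -> U2 -> R) (W3 : X3 -> U3 -> R)
  (W4 : U2 -> U3 -> U4 -> R) (w : Omega) : R :=
  PX (vX1 w, vX2 w, vX3 w, vY w) * W1 (vX1 w) (vU1 w) * W2 (vX2 w) (vU2 w)
  * W3 (vX3 w) (vU3 w) * W4 (vU2 w) (vU3 w) (vU4 w).

Definition Ls (s : R) (P : Omega -> R) : R :=
  - cent P vY (fun w => (vU1 w, vU2 w, vU3 w))
  - s * (minf P (fun w => (vX1 w, vX2 w, vX3 w)) (fun w => (vU1 w, vU2 w, vU3 w))
         + cminf P (fun w => (vX2 w, vX3 w)) (fun w => (vU2 w, vU3 w)) vU1).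

Definition Llow (s : R) (P : Omega -> R) : R :=
  - cent P vY (fun w => (vU1 w, vU4 w))
  - s * minf P vX1 vU1
  - 2 * s * (minf P vX2 vU2 + minf P vX3 vU3)
  + 2 * s * (minf P vU2 vU1 + minf P vU3 (fun w => (vU1 w, vU2 w))).
End Model.

From mathcomp Require Import all_boot all_order all_algebra.
From mathcomp Require Import reals exp.
From mathcomp Require Import ring lra.
Set Implicit Arguments. Unset Strict Implicit. Unset Printing Implicit Defensive.
Import Order.TTheory GRing.Theory Num.Theory.
Local Open Scope ring_scope.

(* Under the factorization P_{X,Y} P_{U1|X1} P_{U2|X2} P_{U3|X3}
   P_{U4|U2,U3}, the information terms of L_s and L_s^low coincide exactly:
     I(X1,X2,X3;U1,U2,U3) = sum_i I(Xi;Ui) - I(U2;U1) - I(U3;U1,U2),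
     I(X2,X3;U2,U3|U1)     = I(X2;U2) + I(X3;U3) - I(U2;U1) - I(U3;U1,U2),
   so the two bounds differ only by H(Y|U1,U4) - H(Y|U1,U2,U3), which is the
   conditional mutual information I(Y;U2,U3|U1,U4) >= 0 because U4 depends on
   the rest only through (U2,U3). *)

Lemma xlnxE (R : realType) (x : R) : xlnx x = x * ln x.
Proof. by rewrite /xlnx; case: eqP => [->|]; rewrite ?mul0r. Qed.

Lemma ln_le_subr1 (R : realType) (x : R) : 0 < x -> ln x <= x - 1.
Proof.
move=> x0; have := @le_ln1Dx R (x - 1); rewrite addrCA subrr addr0; apply.
by rewrite ltrBrDr addrC subrr.
Qed.

(* Used to cancel the factor P(f,g,h) against its own law. *)
Lemma mul_div_le (R : realType) (x a b : R) :
  0 <= x -> 0 <= a -> 0 <= b -> x * (a / (x * b)) <= a / b.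
Proof.
move=> x0 a0 b0; have [->|xn] := eqVneq x 0; first by rewrite mul0r divr_ge0.
by rewrite invfM mulrCA mulVKf.
Qed.

Section Entropy.
Variables (R : realType) (Om : finType) (p : Om -> R).
Hypothesis p0 : forall w, 0 <= p w.

Definition patom (A : finType) (f : Om -> A) (w : Om) : R := pmf_of p f (f w).

Lemma sum_pmf (A : finType) (f : Om -> A) (F : A -> R) :
  \sum_w p w * F (f w) = \sum_a pmf_of p f a * F a.
Proof.
rewrite (partition_big f xpredT) //=; apply: eq_bigr => a _.
by rewrite /pmf_of big_distrl /=; apply: eq_bigr => w /eqP <-.
Qed.

Lemma pmf_total (A : finType) (f : Om -> A) : \sum_a pmf_of p f a = \sum_w p w.
Proof.
have := sum_pmf f (fun _ => 1).
by under eq_bigr do rewrite mulr1; under [in RHS]eq_bigr do rewrite mulr1.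
Qed.

Lemma pmf_ge0 (A : finType) (f : Om -> A) a : 0 <= pmf_of p f a.
Proof. exact: sumr_ge0. Qed.

Lemma pmf_marg (A C : finType) (f : Om -> A) (h : Om -> C) c :
  \sum_a pmf_of p (fun w => (f w, h w)) (a, c) = pmf_of p h c.
Proof.
rewrite /pmf_of [RHS](partition_big f xpredT) //=.
by apply: eq_bigr => a _; apply: eq_bigl => w; rewrite xpair_eqE andbC.
Qed.

Lemma ent_expect (A : finType) (f : Om -> A) :
  ent p f = - \sum_w p w * ln (patom f w).
Proof.
rewrite /ent (sum_pmf f (fun a => ln (pmf_of p f a))).
by congr (- _); apply: eq_bigr => a _; rewrite xlnxE.
Qed.

(* An atom contains its point, so it has positive mass on the support. *)
Lemma patom_ge (A : finType) (f : Om -> A) w : p w <= patom f w.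
Proof. by rewrite /patom /pmf_of (bigD1 w) //= lerDl; apply: sumr_ge0. Qed.

Lemma patom_gt0 (A : finType) (f : Om -> A) w : 0 < p w -> 0 < patom f w.
Proof. by move=> pw; apply: lt_le_trans pw (patom_ge f w). Qed.

Lemma patom_congr (A B : finType) (f : Om -> A) (g : Om -> B) :
  (forall w w', f w = f w' <-> g w = g w') -> forall w, patom f w = patom g w.
Proof.
move=> fg w; rewrite /patom /pmf_of; apply: eq_bigl => w'.
by apply/eqP/eqP => /fg.
Qed.

Lemma ent_congr (A B : finType) (f : Om -> A) (g : Om -> B) :
  (forall w w', f w = f w' <-> g w = g w') -> ent p f = ent p g.
Proof.
by move=> fg; rewrite !ent_expect; under eq_bigr do rewrite (patom_congr fg).
Qed.

(* v is drawn from the kernel K evaluated at c, given the value of f: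
   P(f = f w, v = v w) = P(f = f w) K(c w, v w). *)
Definition kernel_law (A B D : finType) (f : Om -> A) (v : Om -> B)
  (K : D -> B -> R) (c : Om -> D) : Prop :=
  forall w, patom (fun w => (f w, v w)) w = patom f w * K (c w) (v w).

(* H_K(v|c) = -E[ln K(c, v)], the entropy of v given its kernel input c. *)
Definition condent (B D : finType) (K : D -> B -> R) (c : Om -> D) (v : Om -> B) : R :=
  - \sum_w p w * ln (K (c w) (v w)).

(* Chain rule for a kernel law: the entropy increment does not depend on f. *)
Lemma ent_kernel_law (A B D : finType) (f : Om -> A) (v : Om -> B)
    (K : D -> B -> R) (c : Om -> D) :
  kernel_law f v K c -> ent p (fun w => (f w, v w)) = ent p f + condent K c v.
Proof.
move=> law; rewrite !ent_expect /condent -opprD -big_split /=; congr (- _).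
apply: eq_bigr => w _; rewrite -mulrDr law.
have [->|pw] := eqVneq (p w) 0; first by rewrite !mul0r.
have pwp : 0 < p w by rewrite lt0r pw p0.
have fpos := patom_gt0 f pwp.
have Kpos : 0 < K (c w) (v w) by rewrite -(pmulr_rgt0 _ fpos) -law patom_gt0.
by rewrite lnM ?posrE.
Qed.

Section ConditionalMutualInformation.
Variables (A B C : finType) (f : Om -> A) (g : Om -> B) (h : Om -> C).

(* P(f,h) P(g,h) / (P(f,g,h) P(h)) at a value of (f,g,h): the mean of minus
   its logarithm is I(f;g|h). *)
Definition ci_ratio (v : A * B * C) : R :=
  pmf_of p (fun w => (f w, h w)) (v.1.1, v.2) * pmf_of p (fun w => (g w, h w)) (v.1.2, v.2)
  / (pmf_of p (fun w => (f w, g w, h w)) v * pmf_of p h v.2).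

Lemma cminf_expect : cminf p f g h = - \sum_w p w * ln (ci_ratio (f w, g w, h w)).
Proof.
have split_ln w : p w * ln (ci_ratio (f w, g w, h w)) =
    p w * ln (patom (fun w => (f w, h w)) w) + p w * ln (patom (fun w => (g w, h w)) w)
    - p w * ln (patom (fun w => (f w, g w, h w)) w) - p w * ln (patom h w).
  have [->|pw] := eqVneq (p w) 0; first by rewrite !mul0r; ring.
  have pwp : 0 < p w by rewrite lt0r pw p0.
  have pos (D : finType) (e : Om -> D) : patom e w \in Num.pos.
    by rewrite posrE patom_gt0.
  rewrite /ci_ratio /= ln_div ?posrE ?divr_gt0 ?mulr_gt0 -?posrE ?pos // !lnM ?pos //.
  by ring.
rewrite /cminf !ent_expect (eq_bigr _ (fun w _ => split_ln w)) !sumrB big_split /=.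
by ring.
Qed.

(* Summing out f and g: the ratio has total mass at most that of p. *)
Lemma ci_ratio_mass : \sum_w p w * ci_ratio (f w, g w, h w) <= \sum_w p w.
Proof.
pose bound (v : A * B * C) := pmf_of p (fun w => (f w, h w)) (v.1.1, v.2)
  * pmf_of p (fun w => (g w, h w)) (v.1.2, v.2) / pmf_of p h v.2.
apply: (@le_trans _ _ (\sum_v bound v)).
  rewrite (sum_pmf (fun w => (f w, g w, h w)) ci_ratio).
  by apply: ler_sum => v _; apply: mul_div_le; rewrite ?mulr_ge0 ?pmf_ge0.
have -> : \sum_v bound v = \sum_c pmf_of p h c * pmf_of p h c / pmf_of p h c.
  rewrite (eq_bigr (fun v => bound (v.1, v.2))); last by case.
  rewrite -(pair_bigA _ (fun ab c => bound (ab, c))) exchange_big /=.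
  apply: eq_bigr => c _; rewrite (eq_bigr (fun ab => bound ((ab.1, ab.2), c))); last by case.
  rewrite -(pair_bigA _ (fun a b => bound ((a, b), c))).
  rewrite -{1}(pmf_marg f h c) -{1}(pmf_marg g h c) big_distrlr big_distrl /=.
  by apply: eq_bigr => a _; rewrite big_distrl.
rewrite -(pmf_total h); apply: ler_sum => c _.
have [->|hc] := eqVneq (pmf_of p h c) 0; first by rewrite !mul0r.
by rewrite mulfK.
Qed.

(* Gibbs' inequality: E[ln r] <= E[r] - 1 <= 0 for the ratio r above. *)
Lemma cminf_ge0 : 0 <= cminf p f g h.
Proof.
rewrite cminf_expect oppr_ge0.
apply: (@le_trans _ _ (\sum_w p w * ci_ratio (f w, g w, h w) - \sum_w p w));
  last by rewrite subr_le0 ci_ratio_mass.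
rewrite -sumrB; apply: ler_sum => w _.
have [->|pw] := eqVneq (p w) 0; first by rewrite !mul0r subrr.
have pwp : 0 < p w by rewrite lt0r pw p0.
rewrite -{3}(mulr1 (p w)) -mulrBr ler_pM2l // ln_le_subr1 //.
by rewrite /ci_ratio /= divr_gt0 ?mulr_gt0 ?(patom_gt0 _ pwp).
Qed.

End ConditionalMutualInformation.

End Entropy.

Section KernelExtension.
Variables (R : realType) (T U D : finType) (q : T -> R) (K : D -> U -> R) (c : T -> D).
Hypothesis K1 : forall d, \sum_u K d u = 1.

Definition kext (w : T * U) : R := q w.1 * K (c w.1) w.2.

Definition fst_dep (A : finType) (f : T * U -> A) : Prop :=
  forall t u u', f (t, u) = f (t, u').

(* Summing out the new coordinate recovers q. *)
Lemma patom_kext_fst (A : finType) (f : T * U -> A) :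
  fst_dep f -> forall w, patom kext f w = patom q (fun t => f (t, w.2)) w.1.
Proof.
move=> hf [t u]; rewrite /patom /pmf_of /=.
transitivity (\sum_(t' | f (t', u) == f (t, u)) \sum_(u' | true) kext (t', u')).
  rewrite pair_big /=; apply: eq_big => [[t' u']|[t' u'] _] //=.
  by rewrite andbT (hf t' u' u).
by apply: eq_bigr => t' _; rewrite /kext /= -big_distrr /= K1 mulr1.
Qed.

Lemma kernel_law_kext (A : finType) (f : T * U -> A) :
  fst_dep f -> (forall w w', f w = f w' -> c w.1 = c w'.1) ->
  kernel_law kext f (fun w => w.2) K (fun w => c w.1).
Proof.
move=> hf hc [t u]; rewrite (patom_kext_fst (f := f)) // /patom /pmf_of /= big_distrl /=.
transitivity (\sum_(t' | f (t', u) == f (t, u)) \sum_(u' | u' == u) kext (t', u')).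
  rewrite pair_big /=; apply: eq_big => [[t' u']|[t' u'] _] //=.
  by rewrite xpair_eqE; have [->|_] := eqVneq u' u; rewrite ?andbT ?andbF.
apply: eq_bigr => t' /eqP ft'; rewrite big_pred1_eq /kext /=.
by rewrite (hc (t', u) (t, u) ft').
Qed.

Lemma kernel_law_lift (A B E : finType) (f : T * U -> A) (v : T * U -> B)
    (L : E -> B -> R) (e : T * U -> E) :
  fst_dep f -> fst_dep v ->
  (forall u, kernel_law q (fun t => f (t, u)) (fun t => v (t, u)) L (fun t => e (t, u))) ->
  kernel_law kext f v L e.
Proof.
move=> hf hv law [t u].
rewrite !patom_kext_fst //= => [|t' u1 u2]; last by rewrite (hf t' u1 u2) (hv t' u1 u2).
by rewrite law.
Qed.

End KernelExtension.

(* Side conditions comparing tuples of coordinates of the sample space. *)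
Ltac coordinates :=
  move=> [[[[[[[? ?] ?] ?] ?] ?] ?] ?] [[[[[[[? ?] ?] ?] ?] ?] ?] ?];
  cbn; try split; move=> ?; congruence.

Section Model.
Variables (R : realType) (X1 X2 X3 Y U1 U2 U3 U4 : finType).
Variables (PX : X1 * X2 * X3 * Y -> R)
  (W1 : X1 -> U1 -> R) (W2 : X2 -> U2 -> R) (W3 : X3 -> U3 -> R)
  (W4 : U2 -> U3 -> U4 -> R).
Hypotheses (hPX0 : forall x, 0 <= PX x)
  (hW10 : forall x u, 0 <= W1 x u) (hW11 : forall x, \sum_(u : U1) W1 x u = 1)
  (hW20 : forall x u, 0 <= W2 x u) (hW21 : forall x, \sum_(u : U2) W2 x u = 1)
  (hW30 : forall x u, 0 <= W3 x u) (hW31 : forall x, \sum_(u : U3) W3 x u = 1)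
  (hW40 : forall a b u, 0 <= W4 a b u)
  (hW41 : forall a b, \sum_(u : U4) W4 a b u = 1).

Local Notation Om := (Omega X1 X2 X3 Y U1 U2 U3 U4).
Local Notation vX1 := (@vX1 X1 X2 X3 Y U1 U2 U3 U4).
Local Notation vX2 := (@vX2 X1 X2 X3 Y U1 U2 U3 U4).
Local Notation vX3 := (@vX3 X1 X2 X3 Y U1 U2 U3 U4).
Local Notation vY := (@vY X1 X2 X3 Y U1 U2 U3 U4).
Local Notation vU1 := (@vU1 X1 X2 X3 Y U1 U2 U3 U4).
Local Notation vU2 := (@vU2 X1 X2 X3 Y U1 U2 U3 U4).
Local Notation vU3 := (@vU3 X1 X2 X3 Y U1 U2 U3 U4).
Local Notation vU4 := (@vU4 X1 X2 X3 Y U1 U2 U3 U4).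
Local Notation p := (joint PX W1 W2 W3 W4).
Local Notation W4' := (fun d : U2 * U3 => W4 d.1 d.2).
Local Notation HU1 := (condent p W1 vX1 vU1).
Local Notation HU2 := (condent p W2 vX2 vU2).
Local Notation HU3 := (condent p W3 vX3 vU3).
Local Notation HU4 := (condent p W4' (fun w => (vU2 w, vU3 w)) vU4).

Lemma joint_ge0 w : 0 <= p w.
Proof. by rewrite /joint !mulr_ge0. Qed.

(* The joint law is built from P_{X,Y} by drawing U1, U2, U3, U4 in turn. *)
Lemma joint_tower :
  p = kext (kext (kext (kext (fun t => PX (t.1.1.1, t.1.1.2, t.1.2, t.2))
          W1 (fun t => t.1.1.1)) W2 (fun t => t.1.1.1.2)) W3 (fun t => t.1.1.1.2))
        W4' (fun t => (t.1.2, t.2)).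
Proof. by []. Qed.

(* Adding Ui to a statistic f of the coordinates preceding Ui (w.1.1.1.1 is
   the block (X1,X2,X3,Y), w.1.1.1 appends U1, and so on) that determines the
   kernel input of Ui raises the entropy by H(Ui | kernel input). *)
Lemma ent_add_U1 (A : finType) (f : Om -> A) :
  (forall w w', w.1.1.1.1 = w'.1.1.1.1 -> f w = f w') ->
  (forall w w', f w = f w' -> vX1 w = vX1 w') ->
  ent p (fun w => (f w, vU1 w)) = ent p f + HU1.
Proof.
move=> hf hc; apply: (ent_kernel_law joint_ge0); rewrite joint_tower.
apply: kernel_law_lift; [by move=> d; apply: hW41 | by move=> t u u'; apply: hf | by [] | move=> u4].
apply: kernel_law_lift; [exact: hW31 | by move=> t u u'; apply: hf | by [] | move=> u3].
apply: kernel_law_lift; [exact: hW21 | by move=> t u u'; apply: hf | by [] | move=> u2].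
apply: kernel_law_kext; [exact: hW11 | by move=> t u u'; apply: hf | by move=> w w' /hc].
Qed.

Lemma ent_add_U2 (A : finType) (f : Om -> A) :
  (forall w w', w.1.1.1 = w'.1.1.1 -> f w = f w') ->
  (forall w w', f w = f w' -> vX2 w = vX2 w') ->
  ent p (fun w => (f w, vU2 w)) = ent p f + HU2.
Proof.
move=> hf hc; apply: (ent_kernel_law joint_ge0); rewrite joint_tower.
apply: kernel_law_lift; [by move=> d; apply: hW41 | by move=> t u u'; apply: hf | by [] | move=> u4].
apply: kernel_law_lift; [exact: hW31 | by move=> t u u'; apply: hf | by [] | move=> u3].
apply: kernel_law_kext; [exact: hW21 | by move=> t u u'; apply: hf | by move=> w w' /hc].
Qed.

Lemma ent_add_U3 (A : finType) (f : Om -> A) :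
  (forall w w', w.1.1 = w'.1.1 -> f w = f w') ->
  (forall w w', f w = f w' -> vX3 w = vX3 w') ->
  ent p (fun w => (f w, vU3 w)) = ent p f + HU3.
Proof.
move=> hf hc; apply: (ent_kernel_law joint_ge0); rewrite joint_tower.
apply: kernel_law_lift; [by move=> d; apply: hW41 | by move=> t u u'; apply: hf | by [] | move=> u4].
apply: kernel_law_kext; [exact: hW31 | by move=> t u u'; apply: hf | by move=> w w' /hc].
Qed.

Lemma ent_add_U4 (A : finType) (f : Om -> A) :
  (forall w w', w.1 = w'.1 -> f w = f w') ->
  (forall w w', f w = f w' -> (vU2 w, vU3 w) = (vU2 w', vU3 w')) ->
  ent p (fun w => (f w, vU4 w)) = ent p f + HU4.
Proof.
move=> hf hc; apply: (ent_kernel_law joint_ge0); rewrite joint_tower.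
apply: kernel_law_kext; [by move=> d; apply: hW41 | by move=> t u u'; apply: hf | exact: hc].
Qed.

Lemma ent_XU :
  ent p (fun w => ((vX1 w, vX2 w, vX3 w), (vU1 w, vU2 w, vU3 w)))
  = ent p (fun w => (vX1 w, vX2 w, vX3 w)) + HU1 + HU2 + HU3.
Proof.
rewrite (ent_congr _ (g := fun w => (vX1 w, vX2 w, vX3 w, vU1 w, vU2 w, vU3 w)));
  last by coordinates.
by rewrite ent_add_U3 ?ent_add_U2 ?ent_add_U1; try coordinates.
Qed.

Lemma ent_X23U :
  ent p (fun w => ((vX2 w, vX3 w), (vU2 w, vU3 w), vU1 w))
  = ent p (fun w => ((vX2 w, vX3 w), vU1 w)) + HU2 + HU3.
Proof.
rewrite (ent_congr _ (g := fun w => (vX2 w, vX3 w, vU1 w, vU2 w, vU3 w)));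
  last by coordinates.
by rewrite ent_add_U3 ?ent_add_U2; try coordinates.
Qed.

(* The Markov chain Y - (U1,U2,U3) - U4, in two instances. *)
Lemma ent_YU4 :
  ent p (fun w => (vY w, (vU2 w, vU3 w), (vU1 w, vU4 w)))
  = ent p (fun w => (vY w, (vU1 w, vU2 w, vU3 w))) + HU4.
Proof.
rewrite (ent_congr _ (g := fun w => (vY w, (vU1 w, vU2 w, vU3 w), vU4 w)));
  last by coordinates.
by rewrite ent_add_U4; try coordinates.
Qed.

Lemma ent_UU4 :
  ent p (fun w => ((vU2 w, vU3 w), (vU1 w, vU4 w)))
  = ent p (fun w => (vU1 w, vU2 w, vU3 w)) + HU4.
Proof.
rewrite (ent_congr _ (g := fun w => (vU1 w, vU2 w, vU3 w, vU4 w))); last by coordinates.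
by rewrite ent_add_U4; try coordinates.
Qed.

Lemma ent_U21 : ent p (fun w => (vU2 w, vU1 w)) = ent p (fun w => (vU1 w, vU2 w)).
Proof. by apply: ent_congr; coordinates. Qed.

Lemma ent_U3_U12 :
  ent p (fun w => (vU3 w, (vU1 w, vU2 w))) = ent p (fun w => (vU1 w, vU2 w, vU3 w)).
Proof. by apply: ent_congr; coordinates. Qed.

Lemma ent_U23_U1 :
  ent p (fun w => ((vU2 w, vU3 w), vU1 w)) = ent p (fun w => (vU1 w, vU2 w, vU3 w)).
Proof. by apply: ent_congr; coordinates. Qed.

Lemma minf_XiUi :
  [/\ minf p vX1 vU1 = ent p vU1 - HU1, minf p vX2 vU2 = ent p vU2 - HU2
    & minf p vX3 vU3 = ent p vU3 - HU3].
Proof.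
rewrite /minf (ent_add_U1 (f := vX1)) ?(ent_add_U2 (f := vX2)) ?(ent_add_U3 (f := vX3));
  try coordinates.
by split; ring.
Qed.

Lemma minf_XU :
  minf p (fun w => (vX1 w, vX2 w, vX3 w)) (fun w => (vU1 w, vU2 w, vU3 w))
  = minf p vX1 vU1 + minf p vX2 vU2 + minf p vX3 vU3
    - (minf p vU2 vU1 + minf p vU3 (fun w => (vU1 w, vU2 w))).
Proof.
have [-> -> ->] := minf_XiUi.
by rewrite /minf ent_XU ent_U21 ent_U3_U12; ring.
Qed.

Lemma cminf_XU :
  cminf p (fun w => (vX2 w, vX3 w)) (fun w => (vU2 w, vU3 w)) vU1
  = minf p vX2 vU2 + minf p vX3 vU3
    - (minf p vU2 vU1 + minf p vU3 (fun w => (vU1 w, vU2 w))).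
Proof.
have [_ -> ->] := minf_XiUi.
by rewrite /cminf /minf ent_X23U ent_U23_U1 ent_U21 ent_U3_U12; ring.
Qed.

(* H(Y|U1,U2,U3) <= H(Y|U1,U4): the gap is I(Y;U2,U3|U1,U4) >= 0. *)
Lemma cent_gap :
  cent p vY (fun w => (vU1 w, vU2 w, vU3 w)) <= cent p vY (fun w => (vU1 w, vU4 w)).
Proof.
have := cminf_ge0 joint_ge0 vY (fun w => (vU2 w, vU3 w)) (fun w => (vU1 w, vU4 w)).
by rewrite /cminf /cent ent_YU4 ent_UU4; lra.
Qed.

End Model.

Theorem lemma1 (R : realType) (X1 X2 X3 Y U1 U2 U3 U4 : finType)
  (PX : X1 * X2 * X3 * Y -> R)
  (W1 : X1 -> U1 -> R) (W2 : X2 -> U2 -> R) (W3 : X3 -> U3 -> R)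
  (W4 : U2 -> U3 -> U4 -> R) (s : R)
  (hs : 0 <= s)
  (hPX0 : forall x, 0 <= PX x) (hPX1 : \sum_(x : X1 * X2 * X3 * Y) PX x = 1)
  (hW10 : forall x u, 0 <= W1 x u) (hW11 : forall x, \sum_(u : U1) W1 x u = 1)
  (hW20 : forall x u, 0 <= W2 x u) (hW21 : forall x, \sum_(u : U2) W2 x u = 1)
  (hW30 : forall x u, 0 <= W3 x u) (hW31 : forall x, \sum_(u : U3) W3 x u = 1)
  (hW40 : forall a b u, 0 <= W4 a b u)
  (hW41 : forall a b, \sum_(u : U4) W4 a b u = 1) :
  Llow s (joint PX W1 W2 W3 W4) <= Ls s (joint PX W1 W2 W3 W4).
Proof.
rewrite /Ls /Llow minf_XU // cminf_XU //.
move: (cent_gap hPX0 hW10 hW20 hW30 hW40 hW41).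
lra.
Qed.
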